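(* The top cycle satisfies the TS-exclusive monotonicity criterion and the TS-exclusive negative monotonicity (ENM) criterion.
   Context: A tournament $T=(V(T),\succ)$ is a finite set of candidates with an asymmetric and complete binary relation $\succ$. $N^+_T(c)=\{b: c\succ b\}$; $T[B]$ is the subtournament induced by $B$. The top cycle $TC(T)$ is the unique minimal nonempty subset $X\subseteq V(T)$ such that $x\succ y$ for every $x\in X$ and every $y\in V(T)\setminus X$. For a tournament solution $f$ (a map sending every tournament $T$ to a nonempty subset of $V(T)$), say $(T,T')$ with $T=(\mathcal{C},\succ)$, $T'=(\mathcal{C},\succ')$ is a $c$-improvement if $T[\mathcal{C}\setminus\{c\}]=T'[\mathcal{C}\setminus\{c\}]$ and $N^+_T(c)\subseteq N^+_{T'}(c)$. - $f$ is TS-exclusive monotonic if for every $c$-improvement $(T,T')$ with $c\in f(T)$, we have $c\in f(T')$ and $f(T')\subseteq f(T)$. - $f$ satisfies TS-ENM if for every $c$-improvement $(T,T')$ with $c\notin f(T)$, $f(T')\not\subseteq f(T)$ implies $c\in f(T')$. *)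

From mathcomp Require Import all_boot.
Set Implicit Arguments. Unset Strict Implicit. Unset Printing Implicit Defensive.

Record tournament (C : finType) := Tournament {
  beats : rel C;
  beats_asym : forall x y, beats x y -> ~~ beats y x;
  beats_total : forall x y, x != y -> beats x y || beats y x
}.

Definition outnb (C : finType) (T : tournament C) (c : C) : {set C} :=
  [set b | beats T c b].

Definition dominantb (C : finType) (T : tournament C) (X : {set C}) : bool :=
  [forall x in X, forall y in ~: X, beats T x y].

Definition is_top_cycleb (C : finType) (T : tournament C) (X : {set C}) : bool :=
  [&& X != set0, dominantb T X &
      [forall Y : {set C},
         [&& Y != set0, dominantb T Y & Y \subset X] ==> (Y == X)]].

(* The top cycle: the (unique) minimal nonempty dominant set.
   The default [set: C] is never used, since such a set always exists. *)
Definition top_cycle (C : finType) (T : tournament C) : {set C} :=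
  odflt [set: C] [pick X : {set C} | is_top_cycleb T X].

Definition c_improvement (C : finType) (c : C) (T T' : tournament C) : Prop :=
  (forall x y, x != c -> y != c -> beats T x y = beats T' x y) /\
  outnb T c \subset outnb T' c.

Definition tournament_solution :=
  forall C : finType, tournament C -> {set C}.

Definition TS_exclusive_monotonic (f : tournament_solution) : Prop :=
  forall (C : finType) (c : C) (T T' : tournament C),
    c_improvement c T T' -> c \in f C T ->
    c \in f C T' /\ f C T' \subset f C T.

Definition TS_ENM (f : tournament_solution) : Prop :=
  forall (C : finType) (c : C) (T T' : tournament C),
    c_improvement c T T' -> c \notin f C T ->
    ~~ (f C T' \subset f C T) -> c \in f C T'.

From mathcomp Require Import all_boot.

Set Implicit Arguments.
Unset Strict Implicit.
Unset Printing Implicit Defensive.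

(** Dominant sets of a tournament are totally ordered by inclusion, so the top
    cycle is the least nonempty dominant set.  A c-improvement keeps every
    dominant set containing c dominant, and every set avoiding c that is
    dominant after the improvement was already dominant before.  Hence if c is
    outside the new top cycle, the two top cycles dominate each other in both
    tournaments and coincide; both criteria follow from this and minimality. *)

Section TopCycle.
Variables (C : finType) (T : tournament C).

Lemma dominantP (X : {set C}) :
  reflect (forall x y, x \in X -> y \notin X -> beats T x y) (dominantb T X).
Proof.
apply: (iffP forallP) => [domX x y xX yX | domX x].
  by move: (domX x); rewrite xX => /forallP /(_ y); rewrite in_setC yX.
apply/implyP => xX; apply/forallP => y; apply/implyP; rewrite in_setC.
exact: domX.
Qed.

Lemma dominant_setT : dominantb T [set: C].
Proof. by apply/dominantP => x y _; rewrite inE. Qed.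

Lemma dominant_total (X Y : {set C}) :
  dominantb T X -> dominantb T Y -> X \subset Y \/ Y \subset X.
Proof.
move=> /dominantP domX /dominantP domY.
have [|/subsetPn [x xX xNY]] := boolP (X \subset Y); first by left.
right; apply/subsetP => y yY; apply/negPn/negP => yNX.
by have := beats_asym (domX x y xX yNX); rewrite domY.
Qed.

Lemma top_cycleP (x0 : C) : is_top_cycleb T (top_cycle T).
Proof.
rewrite /top_cycle; case: pickP => [X // | no_top_cycle].
have dom_setT : [pred X : {set C} | (X != set0) && dominantb T X] [set: C].
  by rewrite /= dominant_setT andbT; apply/set0Pn; exists x0; rewrite inE.
have [X /minsetP [/andP [nX domX] minX] _] := minset_exists dom_setT.
case/negP: (no_top_cycle X); rewrite /is_top_cycleb nX domX /=.
apply/forallP => Y; apply/implyP => /and3P [nY domY YX].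
by apply/eqP/minX => //=; rewrite nY.
Qed.

Lemma top_cycle_neq0 (x0 : C) : top_cycle T != set0.
Proof. by case/and3P: (top_cycleP x0). Qed.

Lemma dominant_top_cycle : dominantb T (top_cycle T).
Proof.
rewrite /top_cycle; case: pickP => [X /and3P [] // | _].
exact: dominant_setT.
Qed.

Lemma top_cycle_min (D : {set C}) :
  D != set0 -> dominantb T D -> top_cycle T \subset D.
Proof.
move=> nD domD; have [x0 _] := set0Pn _ nD.
have /and3P [_ domX /forallP minX] := top_cycleP x0.
have [// | DX] := dominant_total domX domD.
by move: (minX D); rewrite nD domD DX => /eqP ->.
Qed.

End TopCycle.

Section Improvement.
Variables (C : finType) (c : C) (T T' : tournament C).
Hypothesis improvement : c_improvement c T T'.

Lemma improvement_dominant (D : {set C}) :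
  c \in D -> dominantb T D -> dominantb T' D.
Proof.
case: improvement => same /subsetP out_c cD /dominantP domD.
apply/dominantP => x y xD yND.
have yc : y != c by apply: contraNneq yND => ->.
have [-> | xc] := eqVneq x c; last by rewrite -same ?domD.
by have := out_c y; rewrite !inE; apply; apply: domD.
Qed.

Lemma improvement_dominant_inv (D : {set C}) :
  c \notin D -> dominantb T' D -> dominantb T D.
Proof.
case: improvement => same /subsetP out_c cND /dominantP domD.
apply/dominantP => x y xD yND.
have xc : x != c by apply: contraNneq cND => <-.
have [-> | yc] := eqVneq y c; last by rewrite same ?domD.
have /orP [// | c_x] := beats_total T xc.
have := out_c x; rewrite !inE c_x => /(_ isT) c_x'.
by have := beats_asym (domD x c xD cND); rewrite c_x'.
Qed.

Lemma improvement_top_cycle_sub :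
  c \in top_cycle T -> top_cycle T' \subset top_cycle T.
Proof.
move=> cX; apply: top_cycle_min (top_cycle_neq0 T c) _.
exact: improvement_dominant (dominant_top_cycle T).
Qed.

Lemma improvement_top_cycle_eq :
  c \notin top_cycle T' -> top_cycle T' = top_cycle T.
Proof.
move=> cNY.
have XY : top_cycle T \subset top_cycle T'.
  apply: top_cycle_min (top_cycle_neq0 T' c) _.
  exact: improvement_dominant_inv (dominant_top_cycle T').
have cNX : c \notin top_cycle T by apply: contra cNY; apply: (subsetP XY).
have domX' : dominantb T' (top_cycle T).
  case: improvement => same _.
  move/dominantP: (dominant_top_cycle T) => domX.
  move/dominantP: (dominant_top_cycle T') => domY.
  apply/dominantP => x y xX yNX.
  have xc : x != c by apply: contraNneq cNX => <-.
  have [-> | yc] := eqVneq y c; last by rewrite -same ?domX.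
  exact: domY (subsetP XY x xX) cNY.
apply/eqP; rewrite eqEsubset XY andbT.
exact: top_cycle_min (top_cycle_neq0 T c) domX'.
Qed.

End Improvement.

Theorem lemma1 :
  TS_exclusive_monotonic top_cycle /\ TS_ENM top_cycle.
Proof.
split=> [C c T T' imp cX | C c T T' imp _ not_sub].
- split; last exact: improvement_top_cycle_sub imp cX.
  apply: contraT => cNY; have same_tc := improvement_top_cycle_eq imp cNY.
  by rewrite same_tc cX in cNY.
- apply: contraT => cNY; have same_tc := improvement_top_cycle_eq imp cNY.
  by rewrite same_tc subxx in not_sub.
Qed.
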